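(* For every restriction category $\mathbb{X}$, the category $\mathbf{L}[\mathbb{X}]$ with the assignment $\mathsf{L}(A,a)=(A,\mathrm{id}_A)$ and $\eta_{(A,a)}=a:(A,a)\to(A,\mathrm{id}_A)$ is a local category.
   Context: Composition is diagrammatic ($fg$ = first $f$ then $g$). A restriction category is a category $\mathbb{X}$ with an assignment to each $f:A\to B$ of $\bar f:A\to A$ such that: $\bar ff=f$; $\bar f\bar g=\bar g\bar f$ and $\bar g\bar f=\overline{\bar gf}$ for $f:A\to B$, $g:A\to C$; $f\bar g=\overline{fg}f$ for $f:A\to B$, $g:B\to C$. A restriction idempotent is $a:A\to A$ with $a=\bar a$. $\mathbf{L}[\mathbb{X}]$ is the category whose objects are pairs $(A,a)$ with $a$ a restriction idempotent on $A$, whose morphisms $f:(A,a)\to(B,b)$ are morphisms $f:A\to B$ of $\mathbb{X}$ with $\bar f=a$ and $fb=f$, with identity on $(A,a)$ given by $a$ and composition as in $\mathbb{X}$. A local category is a category $\mathbb{C}$ with, for each object $M$, an object $\mathsf{L}M$ and a morphism $\eta_M:M\to\mathsf{L}M$ such that (L.1) $\mathsf{L}\mathsf{L}M=\mathsf{L}M$ and $\eta_{\mathsf{L}M}=\mathrm{id}_{\mathsf{L}M}$; (L.2) each $\eta_M$ is monic; (L.3) for every $M$ and every morphism $f:N\to\mathsf{L}M$ a pullback of $\eta_M$ along $f$ exists, with leg $m:P\to N$, such that $\mathsf{L}P=\mathsf{L}N$ and $m\eta_N=\eta_P$. *)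

From Stdlib Require Import ProofIrrelevance.

(* Categories with diagrammatic composition: comp f g = "first f then g". *)
Record Category := {
  Ob :> Type;
  Hom : Ob -> Ob -> Type;
  idm : forall A, Hom A A;
  comp : forall A B C, Hom A B -> Hom B C -> Hom A C;
  comp_id_l : forall A B (f : Hom A B), comp A A B (idm A) f = f;
  comp_id_r : forall A B (f : Hom A B), comp A B B f (idm B) = f;
  comp_assoc : forall A B C D (f : Hom A B) (g : Hom B C) (h : Hom C D),
      comp A C D (comp A B C f g) h = comp A B D f (comp B C D g h)
}.
Arguments Hom {c} _ _.
Arguments idm {c} A.
Arguments comp {c A B C} _ _.

Record RestrictionCategory := {
  rc_cat :> Category;
  rbar : forall (A B : rc_cat), Hom A B -> Hom A A;
  R1 : forall (A B : rc_cat) (f : Hom A B), comp (rbar A B f) f = f;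
  R2 : forall (A B C : rc_cat) (f : Hom A B) (g : Hom A C),
      comp (rbar A B f) (rbar A C g) = comp (rbar A C g) (rbar A B f);
  R3 : forall (A B C : rc_cat) (f : Hom A B) (g : Hom A C),
      comp (rbar A C g) (rbar A B f) = rbar A B (comp (rbar A C g) f);
  R4 : forall (A B C : rc_cat) (f : Hom A B) (g : Hom B C),
      comp f (rbar B C g) = comp (rbar A C (comp f g)) f
}.
Arguments rbar {r A B} _.

Section LX.
Variable X : RestrictionCategory.

Record LOb := mkLOb { lo_obj : X; lo_idem : Hom lo_obj lo_obj;
                      lo_ridem : rbar lo_idem = lo_idem }.

Definition LHom (a b : LOb) : Type :=
  { f : Hom (lo_obj a) (lo_obj b) | rbar f = lo_idem a /\ comp f (lo_idem b) = f }.

Lemma rbar_comp_eq (A B C : X) (f : Hom A B) (g : Hom B C) (b : Hom B B) :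
  rbar g = b -> comp f b = f -> rbar (comp f g) = rbar f.
Proof.
  intros Hg Hf.
  assert (E1 : comp (rbar f) (rbar (comp f g)) = rbar (comp f g)).
  { rewrite (R3 X _ _ _ (comp f g) f), <- comp_assoc, R1. reflexivity. }
  assert (E2 : comp (rbar (comp f g)) f = f).
  { rewrite <- R4, Hg, Hf. reflexivity. }
  assert (E3 : comp (rbar (comp f g)) (rbar f) = rbar f).
  { rewrite (R3 X _ _ _ f (comp f g)), E2. reflexivity. }
  rewrite <- E1, R2, E3. reflexivity.
Qed.

Definition Lid (a : LOb) : LHom a a.
Proof.
  exists (lo_idem a). split.
  - exact (lo_ridem a).
  - pattern (lo_idem a) at 1. rewrite <- (lo_ridem a). apply R1.
Defined.

Definition Lcomp {a b c : LOb} (f : LHom a b) (g : LHom b c) : LHom a c.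
Proof.
  exists (comp (proj1_sig f) (proj1_sig g)). split.
  - rewrite (@rbar_comp_eq _ _ _ (proj1_sig f) (proj1_sig g) _ (proj1 (proj2_sig g))
               (proj2 (proj2_sig f))).
    exact (proj1 (proj2_sig f)).
  - rewrite comp_assoc, (proj2 (proj2_sig g)). reflexivity.
Defined.

Lemma LHom_eq (a b : LOb) (f g : LHom a b) : proj1_sig f = proj1_sig g -> f = g.
Proof.
  destruct f as [f Hf], g as [g Hg]; simpl; intros ->.
  f_equal; apply proof_irrelevance.
Qed.

Lemma Lcomp_id_l (a b : LOb) (f : LHom a b) : Lcomp (a:=a) (b:=a) (Lid a) f = f.
Proof.
  apply LHom_eq; simpl. destruct f as [f [Hf1 Hf2]]; simpl.
  rewrite <- Hf1. apply R1.
Qed.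

Lemma Lcomp_id_r (a b : LOb) (f : LHom a b) : Lcomp (b:=b) f (Lid b) = f.
Proof.
  apply LHom_eq; simpl. destruct f as [f [Hf1 Hf2]]; exact Hf2.
Qed.

Lemma Lcomp_assoc (a b c d : LOb) (f : LHom a b) (g : LHom b c) (h : LHom c d) :
  Lcomp (Lcomp (b:=b) f g) h = Lcomp f (Lcomp (b:=c) g h).
Proof. apply LHom_eq; simpl. apply comp_assoc. Qed.

Definition Lcat : Category :=
  {| Ob := LOb; Hom := LHom; idm := Lid; comp := @Lcomp;
     comp_id_l := Lcomp_id_l; comp_id_r := Lcomp_id_r;
     comp_assoc := Lcomp_assoc |}.

Lemma rbar_id (A : X) : rbar (idm A) = idm A.
Proof. rewrite <- (comp_id_r _ _ _ (rbar (idm A))). apply R1. Qed.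

Definition Lfun (a : LOb) : LOb := @mkLOb (lo_obj a) (idm (lo_obj a)) (rbar_id (lo_obj a)).

Definition Leta (a : LOb) : LHom a (Lfun a).
Proof.
  exists (lo_idem a). split.
  - exact (lo_ridem a).
  - simpl. apply comp_id_r.
Defined.

End LX.

Definition monic {C : Category} {A B : C} (m : Hom A B) : Prop :=
  forall (Q : C) (g h : Hom Q A), comp g m = comp h m -> g = h.

Definition is_pullback {C : Category} {P N M Z : C}
  (m : Hom P N) (p : Hom P M) (f : Hom N Z) (g : Hom M Z) : Prop :=
  comp m f = comp p g /\
  forall (Q : C) (u : Hom Q N) (v : Hom Q M), comp u f = comp v g ->
    exists! w : Hom Q P, comp w m = u /\ comp w p = v.

(* Local category (L.1)-(L.3). Object equalities are used to transport
   morphisms via eq_rect. *)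
Definition is_local (C : Category) (L : C -> C) (eta : forall M : C, Hom M (L M)) : Prop :=
  (forall M : C, exists e : L (L M) = L M,
      eq_rect (L (L M)) (fun Y => Hom (L M) Y) (eta (L M)) (L M) e = idm (L M))
  /\ (forall M : C, monic (eta M))
  /\ (forall (M N : C) (f : Hom N (L M)),
        exists (P : C) (m : Hom P N) (p : Hom P M),
          is_pullback m p f (eta M) /\
          exists e : L P = L N,
            eq_rect (L P) (fun Y => Hom P Y) (eta P) (L N) e = comp m (eta N)).

(* In L[X] a morphism into (A,a) already absorbs a, so composing with
   eta_(A,a) = a changes nothing and eta is monic.  The pullback of
   eta_(A,a) along f : (N,n) -> (A,id) restricts N to the domain of f a:
   it is (N, rbar (f a)) with legs rbar (f a) and f a, and a cone (u, v)
   factors through it via u itself because rbar (u f a) = rbar v = rbar u.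
   Since L forgets the idempotent, L P = L N holds on the nose. *)
From Stdlib Require Import Setoid.

Section RestrictionFacts.
Context {X : RestrictionCategory}.

Lemma rbar_comp_rbar_self {A B : X} (f : Hom A B) : comp (rbar f) (rbar f) = rbar f.
Proof. rewrite (R3 X _ _ _ f f), R1. reflexivity. Qed.

Lemma rbar_rbar {A B : X} (f : Hom A B) : rbar (rbar f) = rbar f.
Proof.
  rewrite <- (R1 X _ _ (rbar f)) at 2.
  rewrite R2, (R3 X _ _ _ (rbar f) f), rbar_comp_rbar_self. reflexivity.
Qed.

Lemma ridem_idempotent {A : X} (a : Hom A A) : rbar a = a -> comp a a = a.
Proof. intro Ha. rewrite <- Ha at 1. apply R1. Qed.

Lemma rbar_comp_ridem_comp {A B : X} (f : Hom A B) (b : Hom B B) :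
  rbar b = b -> comp (rbar (comp f b)) f = comp f b.
Proof. intro Hb. rewrite <- R4, Hb. reflexivity. Qed.

Lemma rbar_comp_ridem_comp_rbar {A B : X} (f : Hom A B) (b : Hom B B) :
  rbar b = b -> comp (rbar (comp f b)) (rbar f) = rbar (comp f b).
Proof.
  intro Hb. rewrite (R3 X _ _ _ f (comp f b)), rbar_comp_ridem_comp by exact Hb.
  reflexivity.
Qed.

Lemma comp_rbar_of_rbar_comp {A B C : X} (u : Hom A B) (g : Hom B C) :
  rbar (comp u g) = rbar u -> comp u (rbar g) = u.
Proof. intro Hug. rewrite R4, Hug. apply R1. Qed.

End RestrictionFacts.

Section LocalStructure.
Context {X : RestrictionCategory}.

Lemma Leta_absorbs {Q M : LOb X} (g : LHom X Q M) :
  proj1_sig (Lcomp X g (Leta X M)) = proj1_sig g.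
Proof. exact (proj2 (proj2_sig g)). Qed.

Lemma Leta_Lfun (M : LOb X) : Leta X (Lfun X M) = Lid X (Lfun X M).
Proof. apply LHom_eq. reflexivity. Qed.

Lemma Leta_monic (M : LOb X) : @monic (Lcat X) _ _ (Leta X M).
Proof.
  intros Q g h Hgh. apply LHom_eq.
  rewrite <- (Leta_absorbs g), <- (Leta_absorbs h).
  exact (f_equal (@proj1_sig _ _) Hgh).
Qed.

Context {M N : LOb X} (f : LHom X N (Lfun X M)).

Let fa := comp (proj1_sig f) (lo_idem X M).

Definition Lpb : LOb X := mkLOb X (lo_obj X N) (rbar fa) (rbar_rbar fa).

Definition Lpb_fst : LHom X Lpb N.
Proof.
  exists (rbar fa). split.
  - apply rbar_rbar.
  - simpl. rewrite <- (proj1 (proj2_sig f)).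
    exact (rbar_comp_ridem_comp_rbar (proj1_sig f) _ (lo_ridem X M)).
Defined.

Definition Lpb_snd : LHom X Lpb M.
Proof.
  exists fa. split.
  - reflexivity.
  - unfold fa. rewrite comp_assoc, ridem_idempotent by exact (lo_ridem X M).
    reflexivity.
Defined.

Lemma Lpb_is_pullback : @is_pullback (Lcat X) _ _ _ _ Lpb_fst Lpb_snd f (Leta X M).
Proof.
  split.
  - apply LHom_eq; simpl. unfold fa.
    rewrite rbar_comp_ridem_comp, comp_assoc, ridem_idempotent
      by exact (lo_ridem X M).
    reflexivity.
  - intros Q u v Huv.
    assert (Huv' : comp (proj1_sig u) (proj1_sig f) = proj1_sig v)
      by (rewrite <- (Leta_absorbs v); exact (f_equal (@proj1_sig _ _) Huv)).
    assert (Hufa : comp (proj1_sig u) fa = proj1_sig v)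
      by (unfold fa; rewrite <- comp_assoc, Huv'; exact (Leta_absorbs v)).
    assert (Hw : rbar (proj1_sig u) = lo_idem X Q /\
                 comp (proj1_sig u) (lo_idem X Lpb) = proj1_sig u).
    { split; [exact (proj1 (proj2_sig u)) |].
      apply comp_rbar_of_rbar_comp.
      exact (eq_trans (f_equal rbar Hufa)
               (eq_trans (proj1 (proj2_sig v)) (eq_sym (proj1 (proj2_sig u))))). }
    exists (exist _ (proj1_sig u) Hw : LHom X Q Lpb). split.
    + split; apply LHom_eq; simpl; [exact (proj2 Hw) | exact Hufa].
    + intros w [Hwu _]. apply LHom_eq. simpl.
      rewrite <- (f_equal (@proj1_sig _ _) Hwu).
      exact (proj2 (proj2_sig w)).
Qed.

Lemma Leta_Lpb : Leta X Lpb = Lcomp X Lpb_fst (Leta X N).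
Proof. apply LHom_eq; simpl. exact (eq_sym (proj2 (proj2_sig Lpb_fst))). Qed.

End LocalStructure.

Theorem proposition4p3 (X : RestrictionCategory) :
  @is_local (Lcat X) (Lfun X) (Leta X).
Proof.
  split; [| split].
  - intro M. exists eq_refl. exact (Leta_Lfun M).
  - exact (@Leta_monic X).
  - intros M N f.
    exists (Lpb f), (Lpb_fst f), (Lpb_snd f).
    split; [exact (Lpb_is_pullback f) |].
    exists eq_refl. exact (Leta_Lpb f).
Qed.
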